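(* For every ordinal $\alpha$, $(T_\alpha,P_\alpha)\le(T_{\alpha+1},P_{\alpha+1})$, where $\langle (T_\alpha,P_\alpha)\rangle_{\alpha}$ is the transfinite sequence defined by $(T_0,P_0)=((\emptyset,\emptyset),(\emptyset,\emptyset))$, $(T_{\beta+1},P_{\beta+1})=\Gamma_{\mathscr{TP}}(T_\beta,P_\beta)$ and $(T_\lambda,P_\lambda)=\bigcup_{\beta<\lambda}(T_\beta,P_\beta)$ for limit $\lambda$.
   Context: Language. Let $\mathcal L_{\mathbb N}$ be the language of first-order Peano arithmetic and $\mathcal L=\mathcal L_{\mathbb N}\cup\{\mathrm T,\mathrm P\}$ with unary predicates $\mathrm T,\mathrm P$. $\mathcal L$-formulas are in Tait style: literals are $s=t$, $s\neq t$, $\mathrm Tt$, $\neg\mathrm Tt$, $\mathrm Pt$, $\neg\mathrm Pt$; formulas are built from literals by $\wedge,\vee,\forall,\exists$; negation of an arbitrary formula is defined by De Morgan dualities with $\neg\neg\varphi:=\varphi$. A standard Gödel numbering is fixed; $\#e$ is the code of $e$, $\ulcorner e\urcorner$ the numeral of $\#e$, $\mathrm{val}(t)$ the value of a closed term $t$, $\dot\neg$ the primitive recursive function with $\dot\neg(\#\varphi)=\#\neg\varphi$; $\mathrm T\varphi,\mathrm P\varphi$ abbreviate $\mathrm T\ulcorner\varphi\urcorner,\mathrm P\ulcorner\varphi\urcorner$. Semantics. A partial model is $(\mathbb N,T,P)$ with $\mathbb N$ the standard model and $T=(T^+,T^-)$, $P=(P^+,P^-)$ pairs of subsets of $\omega$.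 Strong Kleene satisfaction $\models_{SK}$: arithmetic literals evaluated in $\mathbb N$; $\mathrm Tt$ satisfied iff $\mathrm{val}(t)\in T^+$, $\neg\mathrm Tt$ iff $\mathrm{val}(t)\in T^-$, likewise for $\mathrm P$ with $P^\pm$; conjunction iff both, disjunction iff at least one, $\forall x\varphi(x)$ iff all numeral instances, $\exists x\varphi(x)$ iff some numeral instance. Base paradoxicality. $\mathrm{PA}[\mathrm{SK}]$ is the two-sided sequent calculus for Strong Kleene logic with identity in $\mathcal L$ (initial sequents $\varphi\Rightarrow\varphi$, cut, weakening, the rule from $\Gamma\Rightarrow\Delta,\varphi$ infer $\neg\varphi,\Gamma\Rightarrow\Delta$, usual rules for $\wedge,\vee,\forall,\exists$, reflexivity $\Rightarrow t=t$, replacement from $\Gamma\Rightarrow\Delta,\varphi(t)$ infer $\Gamma\Rightarrow\Delta,s\neq t,\varphi(s)$) plus the initial sequents of Peano arithmetic and the induction rule for all $\mathcal L$-formulas. A sentence $\varphi$ is base paradoxical iff $\mathrm{PA}[\mathrm{SK}]$ derives $\varphi\Leftrightarrow\neg\mathrm T\varphi$ and $\neg\varphi\Leftrightarrow\mathrm T\varphi$. $B(x)$ is an $\mathcal L_{\mathbb N}$-formula defining in $\mathbb N$ the set of codes of base paradoxical sentences, and $\Pi(x):=B(x)\vee B(\dot\neg x)$. Jump. Let $\mathscr P(x)$ be the $\mathcal L$-formula which is the disjunction of: (1) $x$ codes a sentence and $\Pi(x)$; (2) $x$ codes a sentence $\mathrm Tt$ ($t$ a closed term) and $\mathrm P(\mathrm{val}(t))$;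 (3) $x$ codes a sentence $\neg\mathrm Tt$ and $\mathrm P(\mathrm{val}(t))$; (4) $x$ codes a sentence $\psi\wedge\theta$ and $(\mathrm P\psi\wedge\mathrm P\theta)\vee(\mathrm T\psi\wedge\mathrm P\theta)\vee(\mathrm T\theta\wedge\mathrm P\psi)$; (5) $x$ codes a sentence $\psi\vee\theta$ and $(\mathrm P\psi\wedge\mathrm P\theta)\vee(\neg\mathrm T\psi\wedge\mathrm P\theta)\vee(\neg\mathrm T\theta\wedge\mathrm P\psi)$; (6) $x$ codes a sentence $\forall v\psi$ and $\exists y\,\mathrm P\psi(\dot y)\wedge\forall y(\mathrm P\psi(\dot y)\vee\mathrm T\psi(\dot y))$; (7) $x$ codes a sentence $\exists v\psi$ and $\exists y\,\mathrm P\psi(\dot y)\wedge\forall y(\mathrm P\psi(\dot y)\vee\neg\mathrm T\psi(\dot y))$; here $\psi(\dot y)$ is the code of the result of substituting the numeral of $y$ for $v$. Write $\mathscr P(\varphi)$ for $\mathscr P(\ulcorner\varphi\urcorner)$. Define $\Gamma_{\mathscr{TP}}(T,P)=\big((\{\#\varphi:(\mathbb N,T,P)\models_{SK}\varphi\},\{\#\varphi:(\mathbb N,T,P)\models_{SK}\neg\varphi\}),(\{\#\varphi:(\mathbb N,T,P)\models_{SK}\mathscr P(\varphi)\},\{\#\varphi:(\mathbb N,T,P)\models_{SK}\varphi\vee\neg\varphi\})\big)$, $\varphi$ ranging over $\mathcal L$-sentences. Order: $(X,Y)\le(X',Y')$ iff $X\subseteq X'$ and $Y\subseteq Y'$; $(T,P)\le(T',P')$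 iff $T\le T'$ and $P\le P'$; unions are componentwise. *)

From Stdlib Require Import Arith List.
Import ListNotations.

Inductive term : Type :=
| Var   : nat -> term
| Zero  : term
| Succ  : term -> term
| Plus  : term -> term -> term
| Times : term -> term -> term.

Inductive form : Type :=
| Eq   : term -> term -> form
| Neq  : term -> term -> form
| Tr   : term -> form
| NTr  : term -> form
| Pr   : term -> form
| NPr  : term -> form
| And  : form -> form -> form
| Or   : form -> form -> form
| All  : nat -> form -> form
| Ex   : nat -> form -> form.

Fixpoint neg (f : form) : form :=
  match f with
  | Eq s t => Neq s t | Neq s t => Eq s t
  | Tr t => NTr t | NTr t => Tr t
  | Pr t => NPr t | NPr t => Pr t
  | And a b => Or (neg a) (neg b)
  | Or a b => And (neg a) (neg b)
  | All v a => Ex v (neg a)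
  | Ex v a => All v (neg a)
  end.

Fixpoint fvt (t : term) : list nat :=
  match t with
  | Var v => [v] | Zero => []
  | Succ a => fvt a
  | Plus a b | Times a b => fvt a ++ fvt b
  end.

Fixpoint fv (f : form) : list nat :=
  match f with
  | Eq s t | Neq s t => fvt s ++ fvt t
  | Tr t | NTr t | Pr t | NPr t => fvt t
  | And a b | Or a b => fv a ++ fv b
  | All v a | Ex v a => remove Nat.eq_dec v (fv a)
  end.

Definition sentence (f : form) : Prop := fv f = [].

Fixpoint substt (v : nat) (s : term) (t : term) : term :=
  match t with
  | Var w => if Nat.eqb v w then s else Var w
  | Zero => Zero
  | Succ a => Succ (substt v s a)
  | Plus a b => Plus (substt v s a) (substt v s b)
  | Times a b => Times (substt v s a) (substt v s b)
  end.

Fixpoint subst (v : nat) (s : term) (f : form) : form :=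
  match f with
  | Eq a b => Eq (substt v s a) (substt v s b)
  | Neq a b => Neq (substt v s a) (substt v s b)
  | Tr a => Tr (substt v s a) | NTr a => NTr (substt v s a)
  | Pr a => Pr (substt v s a) | NPr a => NPr (substt v s a)
  | And a b => And (subst v s a) (subst v s b)
  | Or a b => Or (subst v s a) (subst v s b)
  | All w a => if Nat.eqb v w then All w a else All w (subst v s a)
  | Ex w a => if Nat.eqb v w then Ex w a else Ex w (subst v s a)
  end.

Fixpoint substitutable (v : nat) (s : term) (f : form) : Prop :=
  match f with
  | And a b | Or a b => substitutable v s a /\ substitutable v s b
  | All w a | Ex w a =>
      ~ In v (fv f) \/ (~ In w (fvt s) /\ substitutable v s a)
  | _ => True
  end.

Fixpoint num (n : nat) : term :=
  match n with 0 => Zero | S m => Succ (num m) end.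

Definition cpair (a b : nat) : nat := (a + b) * (a + b + 1) / 2 + b.

Fixpoint code_t (t : term) : nat :=
  match t with
  | Var v => cpair 0 v
  | Zero => cpair 1 0
  | Succ a => cpair 2 (code_t a)
  | Plus a b => cpair 3 (cpair (code_t a) (code_t b))
  | Times a b => cpair 4 (cpair (code_t a) (code_t b))
  end.

Fixpoint code (f : form) : nat :=
  match f with
  | Eq a b => cpair 5 (cpair (code_t a) (code_t b))
  | Neq a b => cpair 6 (cpair (code_t a) (code_t b))
  | Tr a => cpair 7 (code_t a)
  | NTr a => cpair 8 (code_t a)
  | Pr a => cpair 9 (code_t a)
  | NPr a => cpair 10 (code_t a)
  | And a b => cpair 11 (cpair (code a) (code b))
  | Or a b => cpair 12 (cpair (code a) (code b))
  | All v a => cpair 13 (cpair v (code a))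
  | Ex v a => cpair 14 (cpair v (code a))
  end.

Definition quote (f : form) : term := num (code f).

Definition notfree (x : nat) (G : list form) : Prop :=
  forall f, In f G -> ~ In x (fv f).

Inductive PASK : list form -> list form -> Prop :=
| sk_init : forall f, PASK [f] [f]
| sk_cut : forall G D f, PASK G (f :: D) -> PASK (f :: G) D -> PASK G D
| sk_weak : forall G D G' D', PASK G D -> incl G G' -> incl D D' -> PASK G' D'
| sk_negL : forall G D f, PASK G (f :: D) -> PASK (neg f :: G) D
| sk_andL1 : forall G D a b, PASK (a :: G) D -> PASK (And a b :: G) D
| sk_andL2 : forall G D a b, PASK (b :: G) D -> PASK (And a b :: G) D
| sk_andR : forall G D a b, PASK G (a :: D) -> PASK G (b :: D) -> PASK G (And a b :: D)
| sk_orL : forall G D a b, PASK (a :: G) D -> PASK (b :: G) D -> PASK (Or a b :: G) D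
| sk_orR1 : forall G D a b, PASK G (a :: D) -> PASK G (Or a b :: D)
| sk_orR2 : forall G D a b, PASK G (b :: D) -> PASK G (Or a b :: D)
| sk_allL : forall G D v a t, substitutable v t a ->
    PASK (subst v t a :: G) D -> PASK (All v a :: G) D
| sk_allR : forall G D v a y, substitutable v (Var y) a ->
    notfree y G -> notfree y D -> ~ In y (fv (All v a)) ->
    PASK G (subst v (Var y) a :: D) -> PASK G (All v a :: D)
| sk_exL : forall G D v a y, substitutable v (Var y) a ->
    notfree y G -> notfree y D -> ~ In y (fv (Ex v a)) ->
    PASK (subst v (Var y) a :: G) D -> PASK (Ex v a :: G) D
| sk_exR : forall G D v a t, substitutable v t a ->
    PASK G (subst v t a :: D) -> PASK G (Ex v a :: D)
| sk_refl : forall t, PASK [] [Eq t t]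
| sk_repl : forall G D v a s t, substitutable v s a -> substitutable v t a ->
    PASK G (subst v t a :: D) -> PASK G (subst v s a :: Neq s t :: D)
| pa_succ0 : forall s, PASK [] [Neq (Succ s) Zero]
| pa_succinj : forall s t, PASK [] [Neq (Succ s) (Succ t); Eq s t]
| pa_plus0 : forall s, PASK [] [Eq (Plus s Zero) s]
| pa_plusS : forall s t, PASK [] [Eq (Plus s (Succ t)) (Succ (Plus s t))]
| pa_times0 : forall s, PASK [] [Eq (Times s Zero) Zero]
| pa_timesS : forall s t, PASK [] [Eq (Times s (Succ t)) (Plus (Times s t) s)]
| sk_ind : forall G D x a t,
    notfree x G -> notfree x D ->
    substitutable x (Succ (Var x)) a -> substitutable x t a ->
    PASK (a :: G) (subst x (Succ (Var x)) a :: D) ->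
    PASK (subst x Zero a :: G) (subst x t a :: D).

Definition equiv_der (a b : form) : Prop := PASK [a] [b] /\ PASK [b] [a].

Definition base_paradoxical (f : form) : Prop :=
  sentence f /\ equiv_der f (NTr (quote f)) /\ equiv_der (neg f) (Tr (quote f)).

Definition Bset (n : nat) : Prop := exists f, base_paradoxical f /\ code f = n.

Definition PiS (f : form) : Prop := Bset (code f) \/ Bset (code (neg f)).

Record state : Type := mkState {
  Tpos : nat -> Prop; Tneg : nat -> Prop;
  Ppos : nat -> Prop; Pneg : nat -> Prop }.

Fixpoint evalt (e : nat -> nat) (t : term) : nat :=
  match t with
  | Var v => e v | Zero => 0
  | Succ a => S (evalt e a)
  | Plus a b => evalt e a + evalt e b
  | Times a b => evalt e a * evalt e b
  end.

Definition val (t : term) : nat := evalt (fun _ => 0) t.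

Definition upd (e : nat -> nat) (v n : nat) : nat -> nat :=
  fun w => if Nat.eqb v w then n else e w.

(* (N, T, P) |=_SK f under assignment e (quantifiers range over all numbers,
   equivalently over all numeral instances) *)
Fixpoint satSK (m : state) (e : nat -> nat) (f : form) : Prop :=
  match f with
  | Eq s t => evalt e s = evalt e t
  | Neq s t => evalt e s <> evalt e t
  | Tr t => Tpos m (evalt e t)
  | NTr t => Tneg m (evalt e t)
  | Pr t => Ppos m (evalt e t)
  | NPr t => Pneg m (evalt e t)
  | And a b => satSK m e a /\ satSK m e b
  | Or a b => satSK m e a \/ satSK m e b
  | All v a => forall n, satSK m (upd e v n) a
  | Ex v a => exists n, satSK m (upd e v n) a
  end.

Definition sat (m : state) (f : form) : Prop := satSK m (fun _ => 0) f.

(* Strong Kleene satisfaction of the L-formula  𝒫(⌜f⌝)  for a sentence f,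
   clause by clause (arithmetical parts are bivalent, evaluated in N). *)
Definition PPsat (m : state) (f : form) : Prop :=
  let P := Ppos m in let T := Tpos m in let NT := Tneg m in
  PiS f
  \/ (exists t, f = Tr t /\ P (val t))
  \/ (exists t, f = NTr t /\ P (val t))
  \/ (exists a b, f = And a b /\
        ((P (code a) /\ P (code b)) \/ (T (code a) /\ P (code b))
         \/ (T (code b) /\ P (code a))))
  \/ (exists a b, f = Or a b /\
        ((P (code a) /\ P (code b)) \/ (NT (code a) /\ P (code b))
         \/ (NT (code b) /\ P (code a))))
  \/ (exists v a, f = All v a /\
        (exists y, P (code (subst v (num y) a))) /\
        (forall y, P (code (subst v (num y) a)) \/ T (code (subst v (num y) a))))
  \/ (exists v a, f = Ex v a /\
        (exists y, P (code (subst v (num y) a))) /\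
        (forall y, P (code (subst v (num y) a)) \/ NT (code (subst v (num y) a)))).

Definition GammaTP (m : state) : state :=
  mkState
    (fun n => exists f, sentence f /\ code f = n /\ sat m f)
    (fun n => exists f, sentence f /\ code f = n /\ sat m (neg f))
    (fun n => exists f, sentence f /\ code f = n /\ PPsat m f)
    (fun n => exists f, sentence f /\ code f = n /\ sat m (Or f (neg f))).

Definition st_le (m m' : state) : Prop :=
  (forall n, Tpos m n -> Tpos m' n) /\ (forall n, Tneg m n -> Tneg m' n) /\
  (forall n, Ppos m n -> Ppos m' n) /\ (forall n, Pneg m n -> Pneg m' n).

Definition st_empty : state :=
  mkState (fun _ => False) (fun _ => False) (fun _ => False) (fun _ => False).

(* ---------- Well-orders (stand-ins for initial segments of the ordinals) ---------- *)
Record wellorder : Type := {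
  wo_car :> Type;
  wo_lt : wo_car -> wo_car -> Prop;
  wo_wf : well_founded wo_lt;
  wo_trans : forall x y z, wo_lt x y -> wo_lt y z -> wo_lt x z;
  wo_total : forall x y, wo_lt x y \/ x = y \/ wo_lt y x }.

Definition wo_min (W : wellorder) (i : W) : Prop := forall k, ~ wo_lt W k i.
Definition wo_succ (W : wellorder) (i j : W) : Prop :=
  wo_lt W i j /\ forall k, ~ (wo_lt W i k /\ wo_lt W k j).
Definition wo_limit (W : wellorder) (j : W) : Prop :=
  ~ wo_min W j /\ forall i, ~ wo_succ W i j.

Definition st_bigunion (W : wellorder) (S : W -> state) (j : W) : state :=
  mkState
    (fun n => exists k, wo_lt W k j /\ Tpos (S k) n)
    (fun n => exists k, wo_lt W k j /\ Tneg (S k) n)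
    (fun n => exists k, wo_lt W k j /\ Ppos (S k) n)
    (fun n => exists k, wo_lt W k j /\ Pneg (S k) n).

Definition is_TP_sequence (W : wellorder) (S : W -> state) : Prop :=
  (forall i, wo_min W i -> S i = st_empty) /\
  (forall i j, wo_succ W i j -> S j = GammaTP (S i)) /\
  (forall j, wo_limit W j -> S j = st_bigunion W S j).

(* Gamma_TP is monotone, since every clause of Strong Kleene satisfaction and
   of the jump predicate is positive in T and P.  The iteration of a monotone
   operator from the empty state, taking unions at limits, is then increasing:
   by transfinite induction on j one shows simultaneously that S k <= S j for
   all k < j and that S j <= F (S j).  At a successor j = i + 1 the second
   claim for i reads S i <= S j, and S j = F (S i) <= F (S j) by monotonicity;
   at a limit, S j is the union of the S k <= F (S k) <= F (S j). *)
From Stdlib Require Import Classical.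

Lemma st_le_trans (a b c : state) : st_le a b -> st_le b c -> st_le a c.
Proof. unfold st_le; intuition. Qed.

Lemma st_empty_le (m : state) : st_le st_empty m.
Proof. unfold st_le; simpl; tauto. Qed.

Lemma st_le_bigunion (W : wellorder) (S : W -> state) (k j : W) :
  wo_lt W k j -> st_le (S k) (st_bigunion W S j).
Proof. intros Hkj; unfold st_le; simpl; repeat split; intros n Hn; exists k; auto. Qed.

Lemma st_bigunion_le (W : wellorder) (S : W -> state) (j : W) (m : state) :
  (forall k, wo_lt W k j -> st_le (S k) m) -> st_le (st_bigunion W S j) m.
Proof.
  intros Hub; unfold st_le; simpl; repeat split;
    intros n (k & Hkj & Hn); apply (Hub k Hkj); exact Hn.
Qed.

Lemma satSK_mono (m m' : state) :
  st_le m m' -> forall f e, satSK m e f -> satSK m' e f.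
Proof.
  intros (HT & HNT & HP & HNP) f; induction f; intros e Hs; simpl in *; auto.
  - destruct Hs; split; auto.
  - destruct Hs; [left | right]; auto.
  - destruct Hs as [x Hx]; exists x; auto.
Qed.

Lemma PPsat_mono (m m' : state) : st_le m m' -> forall f, PPsat m f -> PPsat m' f.
Proof.
  intros (HT & HNT & HP & _) f Hp; unfold PPsat in *.
  destruct Hp as [H|[H|[H|[H|[H|[H|H]]]]]];
    [left | do 1 right; left | do 2 right; left | do 3 right; left
    | do 4 right; left | do 5 right; left | do 6 right]; auto.
  1,2: destruct H as (t & -> & H); eauto.
  1,2: destruct H as (a & b & -> & H); exists a, b; intuition.
  1,2: destruct H as (v & a & -> & (y & Hy) & Hc); exists v, a;
       split; [reflexivity | split; [exists y; auto | intros z; destruct (Hc z); auto]].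
Qed.

Lemma GammaTP_mono (m m' : state) : st_le m m' -> st_le (GammaTP m) (GammaTP m').
Proof.
  intros Hle; unfold st_le, GammaTP; simpl; repeat split;
    intros n (f & Hf & Hcode & Hs); exists f; repeat split; auto;
    first [eapply satSK_mono; eauto | eapply PPsat_mono; eauto].
Qed.

Lemma wo_cases (W : wellorder) (j : W) :
  wo_min W j \/ (exists i, wo_succ W i j) \/ wo_limit W j.
Proof.
  destruct (classic (wo_min W j)) as [Hmin | Hmin]; [now left | right].
  destruct (classic (exists i, wo_succ W i j)) as [Hsucc | Hsucc]; [now left | right].
  split; [exact Hmin | intros i Hi; apply Hsucc; now exists i].
Qed.

Lemma wo_lt_succ (W : wellorder) (i j k : W) :
  wo_succ W i j -> wo_lt W k j -> wo_lt W k i \/ k = i.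
Proof.
  intros [Hij Hgap] Hkj.
  destruct (wo_total W k i) as [Hki | [Hki | Hik]]; auto.
  exfalso; exact (Hgap k (conj Hik Hkj)).
Qed.

(* [is_TP_sequence W S] is convertible to [is_iteration GammaTP W S]. *)
Definition is_iteration (F : state -> state) (W : wellorder) (S : W -> state) : Prop :=
  (forall i, wo_min W i -> S i = st_empty) /\
  (forall i j, wo_succ W i j -> S j = F (S i)) /\
  (forall j, wo_limit W j -> S j = st_bigunion W S j).

Section MonotoneIteration.

Variable F : state -> state.
Hypothesis F_mono : forall m m', st_le m m' -> st_le (F m) (F m').
Variable W : wellorder.
Variable S : W -> state.
Hypothesis S_iteration : is_iteration F W S.

Definition increasing_upto (j : W) : Prop :=
  st_le (S j) (F (S j)) /\ forall k, wo_lt W k j -> st_le (S k) (S j).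

Lemma increasing_upto_min (j : W) : wo_min W j -> increasing_upto j.
Proof.
  destruct S_iteration as (S_min & _ & _); intros Hmin; unfold increasing_upto.
  rewrite (S_min j Hmin); split; [apply st_empty_le |].
  intros k Hkj; exfalso; exact (Hmin k Hkj).
Qed.

Lemma increasing_upto_succ (i j : W) :
  wo_succ W i j -> increasing_upto i -> increasing_upto j.
Proof.
  destruct S_iteration as (_ & S_succ & _); intros Hij (Hpre & Hbelow); unfold increasing_upto.
  assert (Hle : st_le (S i) (S j)) by (rewrite (S_succ i j Hij); exact Hpre).
  split.
  - rewrite (S_succ i j Hij) at 1; apply F_mono, Hle.
  - intros k Hkj; destruct (wo_lt_succ W i j k Hij Hkj) as [Hki | ->]; [| exact Hle].
    exact (st_le_trans _ _ _ (Hbelow k Hki) Hle).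
Qed.

Lemma increasing_upto_limit (j : W) :
  wo_limit W j -> (forall k, wo_lt W k j -> st_le (S k) (F (S k))) ->
  increasing_upto j.
Proof.
  destruct S_iteration as (_ & _ & S_limit); intros Hlim Hpre; unfold increasing_upto.
  assert (Hbelow : forall k, wo_lt W k j -> st_le (S k) (S j)).
  { intros k Hkj; rewrite (S_limit j Hlim); exact (st_le_bigunion W S k j Hkj). }
  split; [| exact Hbelow].
  rewrite (S_limit j Hlim) at 1; apply st_bigunion_le; intros k Hkj.
  exact (st_le_trans _ _ _ (Hpre k Hkj) (F_mono _ _ (Hbelow k Hkj))).
Qed.

Lemma iteration_increasing_upto (j : W) : increasing_upto j.
Proof.
  induction j as [j IH] using (well_founded_ind (wo_wf W)).
  destruct (wo_cases W j) as [Hmin | [(i & Hij) | Hlim]].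
  - exact (increasing_upto_min j Hmin).
  - exact (increasing_upto_succ i j Hij (IH i (proj1 Hij))).
  - apply increasing_upto_limit; [exact Hlim |].
    intros k Hkj; exact (proj1 (IH k Hkj)).
Qed.

Lemma iteration_succ_le (i j : W) : wo_succ W i j -> st_le (S i) (S j).
Proof.
  intros Hij; apply (iteration_increasing_upto j); exact (proj1 Hij).
Qed.

End MonotoneIteration.

Theorem mainTheorem4 :
  forall (W : wellorder) (S : W -> state),
    is_TP_sequence W S ->
    forall i j : W, wo_succ W i j -> st_le (S i) (S j).
Proof.
  intros W S HS.
  exact (iteration_succ_le GammaTP GammaTP_mono W S HS).
Qed.
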